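(* Let $k,n,m$ be positive integers with $n+m\le k$ and let $q$ be a prime power. Then there exists a distributed computing (MapReduce) scheme with $$K^{\mathcal{C}}=\frac{1}{n!}q^{\frac{n(n-1)}{2}}\prod_{i=0}^{n-1}\binom{k-i}{1}_q$$ computing nodes, number of file batches $$F^{\mathcal{C}}=\frac{1}{m!}q^{\frac{m(m-1)}{2}}\prod_{i=0}^{m-1}\binom{k-i}{1}_q,$$ computation load $$r^{\mathcal{C}}=K^{\mathcal{C}}\Big(1-q^{nm}\prod_{i=0}^{m-1}\frac{\binom{k-n-i}{1}_q}{\binom{k-i}{1}_q}\Big),$$ and communication load $$L^{\mathcal{C}}=\frac{q^{nm}}{\binom{n+m}{n}-1}\prod_{i=0}^{n-1}\frac{\binom{k-m-i}{1}_q}{\binom{k-i}{1}_q}.$$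
   Context: $\binom{a}{1}_q=\frac{q^a-1}{q-1}$; $\binom{n+m}{n}$ is an ordinary binomial coefficient. Distributed computing model: there are $N$ input files, $K^{\mathcal{C}}$ computing nodes and $Q$ output functions (with $Q/K^{\mathcal{C}}$ an integer). In the map phase the files are split into $F^{\mathcal{C}}$ batches of $N/F^{\mathcal{C}}$ files each; each node $k$ stores a set $\mathcal{M}_k$ of files (a union of batches) and computes, for every file it stores, the $Q$ intermediate values (one per output function), each a $T$-bit vector. In the shuffle phase each node $k$ broadcasts to the others a signal of $l_k$ bits computed from its intermediate values. In the reduce phase each node is assigned $Q/K^{\mathcal{C}}$ output functions and must recover, from the received signals and its own intermediate values, all intermediate values (over all $N$ files) of its assigned functions. The computation load is $r^{\mathcal{C}}=\sum_{k}|\mathcal{M}_k|/N$ and the communication load is $L^{\mathcal{C}}=\sum_k l_k/(QNT)$. *)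

From mathcomp Require Import all_boot all_order all_algebra.
Set Implicit Arguments. Unset Strict Implicit. Unset Printing Implicit Defensive.
Import Order.TTheory GRing.Theory Num.Theory.

Definition is_prime_power (q : nat) : Prop :=
  exists p e : nat, prime p /\ 0 < e /\ q = p ^ e.

Definition gbin1 (q a : nat) : rat :=
  (((q%:R : rat) ^+ a) - 1) / ((q%:R : rat) - 1).

Definition ivals (N Q T : nat) := 'I_N -> 'I_Q -> T.-tuple bool.

(* A MapReduce scheme with N files, K nodes, Q output functions,
   F file batches (N/F files each) and T-bit intermediate values. *)
Record scheme (N K Q F T : nat) := Scheme {
  batch : 'I_N -> 'I_F;
  batch_size : forall b : 'I_F, #|[set f | batch f == b]| = N %/ F;
  store : 'I_K -> {set 'I_F};
  assign : 'I_Q -> 'I_K;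
  assign_size : forall k : 'I_K, #|[set j | assign j == k]| = Q %/ K;
  (* shuffle phase: node k broadcasts len k bits computed from its
     intermediate values (those of the files it stores) *)
  len : 'I_K -> nat;
  enc : 'I_K -> ivals N Q T -> seq bool;
  enc_size : forall k v, size (enc k v) = len k;
  enc_local : forall k (v v' : ivals N Q T),
    (forall f j, batch f \in store k -> v f j = v' f j) -> enc k v = enc k v';
  dec : 'I_K -> ('I_K -> seq bool) -> ivals N Q T -> ivals N Q T;
  dec_local : forall k (s s' : 'I_K -> seq bool) (v v' : ivals N Q T),
    (forall i, s i = s' i) ->
    (forall f j, batch f \in store k -> v f j = v' f j) ->
    forall f j, dec k s v f j = dec k s' v' f j;
  dec_correct : forall k (v : ivals N Q T) f j,
    assign j = k -> dec k (fun i => enc i v) v f j = v f j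
}.

Definition stored_files N K Q F T (S : scheme N K Q F T) (k : 'I_K) : {set 'I_N} :=
  [set f | batch S f \in store S k].

Definition comp_load N K Q F T (S : scheme N K Q F T) : rat :=
  ((\sum_(k < K) #|stored_files S k|)%N)%:R / (N%:R).

Definition comm_load N K Q F T (S : scheme N K Q F T) : rat :=
  ((\sum_(k < K) len S k)%N)%:R / ((Q * N * T)%N%:R).

(* Nodes are the sets of n linearly independent points of the projective space
   of F_q^k, batches the sets of m such points and groups the sets of n + m such
   points; node U stores batch B unless U :|: B is a group.  A group S contains
   C = 'C(n + m, n) nodes U, each missing exactly the batch S :\: U.  The values
   a node misses are cut into C - 1 pieces, and every node U' of S broadcasts
   the XOR, over the other nodes U of S, of one piece of what U misses: U'
   stores all those batches, and U can strip all terms but its own.  Hence the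
   loads are K - #groups * C / F and #groups * C / (K F (C - 1)).  Extending
   independent sets point by point gives G_j j! (q - 1)^j = prod_(i < j)
   (q^k - q^i) for the number G_j of independent j-sets, whence K = G_n,
   F = G_m and #groups * C = K F q^(nm) prod_(i < m) [k-n-i]_q / [k-i]_q
   (and likewise with n and m exchanged). *)

From mathcomp Require Import all_boot all_order all_algebra all_field.
From mathcomp Require Import zify ring.
From Stdlib Require Import FunctionalExtensionality.
Import Order.TTheory GRing.Theory Num.Theory.

Set Implicit Arguments.
Unset Strict Implicit.
Unset Printing Implicit Defensive.

Lemma card_dep_pairs (T1 T2 : finType) (P : pred T1) (Q : T1 -> pred T2) :
  #|[set p : T1 * T2 | P p.1 && Q p.1 p.2]| = (\sum_(a | P a) #|[set b | Q a b]|)%N.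
Proof.
rewrite -sum1_card; under [RHS]eq_bigr do rewrite -sum1_card.
by rewrite pair_big_dep; apply: eq_bigl => p; rewrite !inE.
Qed.

Section ProjectivePoints.
Variables (F : finFieldType) (k : nat).
Local Notation V := 'rV[F]_k.
Local Notation q := #|F|.
Local Open Scope ring_scope.

(* A point of the projective space over [F^k] is represented by the vector of
   its line with the least [enum_rank]. *)
Definition proj_rep (x : V) : bool :=
  (x != 0) && [forall c : F, (c != 0) ==> (enum_rank x <= enum_rank (c *: x))%N].

Lemma proj_rep_scale_inj (c c' : F) (x x' : V) :
  c != 0 -> c' != 0 -> proj_rep x -> proj_rep x' -> c *: x = c' *: x' ->
  c = c' /\ x = x'.
Proof.
move=> c0 c'0 /andP[x0 /forallP minx] /andP[_ /forallP minx'] E.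
have ex' : x' = (c'^-1 * c) *: x by rewrite -scalerA E scalerA mulVf // scale1r.
have ex : x = (c^-1 * c') *: x' by rewrite -scalerA -E scalerA mulVf // scale1r.
have le1 := minx (c'^-1 * c); rewrite mulf_neq0 ?invr_eq0 //= -ex' in le1.
have le2 := minx' (c^-1 * c'); rewrite mulf_neq0 ?invr_eq0 //= -ex in le2.
have xx' : x = x'.
  by apply: enum_rank_inj; apply: val_inj; apply/eqP; rewrite eqn_leq le1 le2.
split=> //; apply/eqP; rewrite -subr_eq0.
have : (c - c') *: x = 0 by rewrite scalerBl E -xx' subrr.
by move/eqP; rewrite scaler_eq0 (negbTE x0) orbF.
Qed.

Lemma proj_rep_exists (y : V) : y != 0 -> exists2 c : F, c != 0 & proj_rep (c *: y).
Proof.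
move=> y0.
case: (@arg_minnP F 1 (fun c => c != 0) (fun c => enum_rank (c *: y)) (oner_neq0 _)).
move=> c c0 minc; exists c => //.
rewrite /proj_rep scaler_eq0 negb_or c0 y0 /=; apply/forallP => d; apply/implyP => d0.
by rewrite scalerA; apply: minc; rewrite mulf_neq0.
Qed.

Lemma card_proj_rep_vspace (W : {vspace V}) :
  ((q - 1) * #|[set x | proj_rep x & x \in W]|)%N = (q ^ \dim W - 1)%N.
Proof.
pose D := [set p : F * V | (p.1 != 0) && (proj_rep p.2 && (p.2 \in W))].
have cardD : #|D| = ((q - 1) * #|[set x | proj_rep x & x \in W]|)%N.
  rewrite (card_dep_pairs (fun c => c != 0) (fun _ x => proj_rep x && (x \in W))).
  by rewrite sum_nat_const cardC1 subn1 -cardsE.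
have scale_inj : {in D &, injective (fun p => p.1 *: p.2)}.
  move=> [c x] [c' x'] /[!inE] /= /andP[c0 /andP[rx _]] /andP[c'0 /andP[rx' _]] /= E.
  by case: (proj_rep_scale_inj c0 c'0 rx rx' E) => -> ->.
have scaleD : [set p.1 *: p.2 | p in D] = [set y | (y \in W) && (y != 0)].
  apply/setP => y; rewrite inE; apply/imsetP/andP.
    case=> -[c x] /[!inE] /andP[c0 /andP[/andP[x0 _] xW]] ->.
    by rewrite memvZ // scaler_eq0 negb_or c0 x0.
  case=> yW y0; have [c c0 ry] := proj_rep_exists y0.
  exists (c^-1, c *: y); last by rewrite /= scalerA mulVf // scale1r.
  by rewrite inE /= invr_eq0 c0 ry memvZ.
rewrite -cardD -(card_in_imset scale_inj) scaleD -card_vspace.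
rewrite -[#|W|]cardsE (cardsD1 0 [set x in W]) inE mem0v add1n subn1.
by apply: eq_card => y; rewrite !inE andbC.
Qed.

Definition indep_points (j : nat) (A : {set V}) : bool :=
  [&& #|A| == j, A \subset [set x | proj_rep x] & free (enum A)].

Definition n_indep_points (j : nat) : nat := #|[set A | indep_points j A]|.

Lemma indep_points_card j A : indep_points j A -> #|A| = j.
Proof. by case/and3P=> /eqP. Qed.

Lemma indep_points_dim j A : indep_points j A -> \dim <<enum A>> = j.
Proof. by case/and3P=> /eqP cA _ /eqP; rewrite -cardE cA. Qed.

Lemma free_enum_subset (A S : {set V}) : A \subset S -> free (enum S) -> free (enum A).
Proof.
move=> AS; suff /perm_free-> : perm_eq (enum S) (enum A ++ enum (S :\: A)).
  exact: catl_free.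
apply: uniq_perm; rewrite ?enum_uniq // ?cat_uniq ?enum_uniq ?andbT.
  by apply/hasPn => x; rewrite !mem_enum !inE => /andP[].
move=> x; rewrite mem_cat !mem_enum !inE.
by case xA: (x \in A); rewrite //= (subsetP AS).
Qed.

Lemma free_enum_setU1 (A : {set V}) x :
  x \notin A -> free (enum (x |: A)) = (x \notin <<enum A>>%VS) && free (enum A).
Proof.
move=> xA; rewrite -free_cons; apply: perm_free.
apply: uniq_perm; rewrite /= ?mem_enum ?xA ?enum_uniq //.
by move=> y; rewrite in_cons !mem_enum in_setU1.
Qed.

Lemma indep_points_split a b (S U : {set V}) :
  indep_points (a + b) S -> U \subset S -> #|U| = a ->
  indep_points a U && indep_points b (S :\: U).
Proof.
case/and3P=> /eqP cS rS fS US cU; rewrite /indep_points cardsDS // cS cU addKn !eqxx.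
rewrite (subset_trans US) ?(subset_trans (subsetDl _ _)) //=.
by rewrite (free_enum_subset US) ?(free_enum_subset (subsetDl _ _)).
Qed.

Lemma indep_points_setU1 j A x : indep_points j A -> proj_rep x ->
  x \notin <<enum A>>%VS -> indep_points j.+1 (x |: A).
Proof.
case/and3P=> /eqP cA rA fA rx xA.
have xA' : x \notin A by apply: contra xA => xA; rewrite memv_span ?mem_enum.
rewrite /indep_points cardsU1 xA' cA eqxx subUset sub1set inE rx rA /=.
by rewrite free_enum_setU1 // xA fA.
Qed.

Lemma indep_points_setD1 j B x : indep_points j.+1 B -> x \in B ->
  [&& indep_points j (B :\ x), proj_rep x & x \notin <<enum (B :\ x)>>%VS].
Proof.
case/and3P=> /eqP cB rB fB xB.
have : free (enum (x |: B :\ x)) by rewrite setD1K.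
rewrite free_enum_setU1 ?setD11 // => /andP[xB' fB'].
rewrite /indep_points xB' fB' !andbT.
move: cB; rewrite (cardsD1 x) xB add1n => -[->]; rewrite eqxx /=.
rewrite (subset_trans (subsetDl _ _) rB) /=.
by move/subsetP: rB => /(_ x xB); rewrite inE.
Qed.

Lemma card_proj_rep_outside j A : indep_points j A ->
  ((q - 1) * #|[set x | proj_rep x & x \notin <<enum A>>%VS]|)%N = (q ^ k - q ^ j)%N.
Proof.
move=> iA.
have all := card_proj_rep_vspace fullv; have span := card_proj_rep_vspace <<enum A>>.
rewrite dimvf /dim /= mul1n in all; rewrite (indep_points_dim iA) in span.
have split : #|[set x | proj_rep x & x \in fullv]| =
    (#|[set x | proj_rep x & x \in <<enum A>>%VS]| +
     #|[set x | proj_rep x & x \notin <<enum A>>%VS]|)%N.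
  rewrite -(cardsID [set x | x \in <<enum A>>%VS]).
  by congr (_ + _)%N; apply: eq_card => x; rewrite !inE memvf andbT // andbC.
have q_pos : (1 <= q ^ j)%N by rewrite expn_gt0 (cardD1 0).
move: all; rewrite split mulnDr span.
move: q_pos; set a := (q ^ j)%N; set b := (_ * #|_|)%N; set c := (q ^ k)%N.
lia.
Qed.

(* Double counting of the pairs (B, x) with [x \in B]: removing [x] from [B]
   leaves an independent [j]-set [A] with [x] outside its span. *)
Lemma n_indep_points_rec j :
  ((q - 1) * (j.+1 * n_indep_points j.+1))%N = (n_indep_points j * (q ^ k - q ^ j))%N.
Proof.
pose ext := [set p : {set V} * V |
  indep_points j p.1 && (proj_rep p.2 && (p.2 \notin <<enum p.1>>%VS))].
pose pointed := [set p : {set V} * V | indep_points j.+1 p.1 && (p.2 \in p.1)].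
have card_ext : ((q - 1) * #|ext|)%N = (n_indep_points j * (q ^ k - q ^ j))%N.
  rewrite (card_dep_pairs (indep_points j)
    (fun A x => proj_rep x && (x \notin <<enum A>>%VS))).
  rewrite big_distrr /= (eq_bigr (fun _ => q ^ k - q ^ j)%N).
    by rewrite sum_nat_const /n_indep_points cardsE.
  by move=> A iA; rewrite -(card_proj_rep_outside iA).
have card_pointed : #|pointed| = (j.+1 * n_indep_points j.+1)%N.
  rewrite (card_dep_pairs (indep_points j.+1) (fun B x => x \in B)).
  rewrite (eq_bigr (fun _ => j.+1)).
    by rewrite sum_nat_const /n_indep_points cardsE mulnC.
  by move=> B iB; rewrite cardsE (indep_points_card iB).
have notin_ext A x : (A, x) \in ext -> x \notin A.
  rewrite inE => /and3P[_ _]; apply: contra => xA.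
  by rewrite memv_span ?mem_enum.
have add_inj : {in ext &, injective (fun p => (p.2 |: p.1, p.2))}.
  move=> [A x] [A' x'] eA eA' [E xx']; subst x'.
  by rewrite -(setU1K (notin_ext _ _ eA)) E setU1K // (notin_ext _ _ eA').
rewrite -card_pointed -card_ext -(card_in_imset add_inj); congr (_ * _)%N.
apply: eq_card => -[B x]; rewrite inE /=; apply/idP/imsetP.
  case/andP=> iB xB; exists (B :\ x, x); last by rewrite /= setD1K.
  by rewrite inE; case/and3P: (indep_points_setD1 iB xB) => -> -> ->.
case=> -[A y] /[!inE] /and3P[iA ry yA] [-> ->].
by rewrite setU11 andbT indep_points_setU1.
Qed.

Lemma n_indep_points0 : n_indep_points 0 = 1%N.
Proof.
rewrite /n_indep_points (_ : [set A | indep_points 0 A] = [set set0]) ?cards1 //.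
apply/setP => A; rewrite !inE /indep_points cards_eq0.
by case: eqP => //= ->; rewrite sub0set enum_set0 /free span_nil dimv0.
Qed.

Lemma n_indep_points_prod j :
  (n_indep_points j * j`! * (q - 1) ^ j)%N = (\prod_(i < j) (q ^ k - q ^ i))%N.
Proof.
elim: j => [|j IH]; first by rewrite n_indep_points0 big_ord0.
rewrite big_ord_recr /= -IH factS expnS.
transitivity ((q - 1) * (j.+1 * n_indep_points j.+1) * (j`! * (q - 1) ^ j))%N.
  by ring.
by rewrite n_indep_points_rec; ring.
Qed.

End ProjectivePoints.

Section OrdinalBlocks.
Variables (N p d : nat).
Hypothesis eqN : N = (p * d)%N.

Lemma ord_lt_mul (i : 'I_N) : (i < p * d)%N.
Proof. by rewrite -eqN. Qed.

Lemma ord_div_subproof (i : 'I_N) : (i %/ d < p)%N.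
Proof.
have := ord_lt_mul i; case: (posnP d) => [->|d_gt0]; first by rewrite muln0.
by rewrite ltn_divLR.
Qed.

Lemma ord_mod_subproof (i : 'I_N) : (i %% d < d)%N.
Proof. by have := ord_lt_mul i; rewrite ltn_mod; case: d => //; rewrite muln0. Qed.

Lemma ord_join_subproof (b : 'I_p) (a : 'I_d) : (b * d + a < N)%N.
Proof. by rewrite eqN; have := ltn_ord a; have := ltn_ord b; nia. Qed.

Definition ord_div (i : 'I_N) : 'I_p := Ordinal (ord_div_subproof i).
Definition ord_mod (i : 'I_N) : 'I_d := Ordinal (ord_mod_subproof i).
Definition ord_join (b : 'I_p) (a : 'I_d) : 'I_N := Ordinal (ord_join_subproof b a).

Lemma ord_div_join b a : ord_div (ord_join b a) = b.
Proof.
apply: val_inj; rewrite /= divnMDl ?divn_small ?addn0 //.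
by case: (posnP d) a => [->|//] [].
Qed.

Lemma ord_mod_join b a : ord_mod (ord_join b a) = a.
Proof. by apply: val_inj; rewrite /= modnMDl modn_small. Qed.

Lemma ord_joinK i : ord_join (ord_div i) (ord_mod i) = i.
Proof. by apply: val_inj; rewrite /= -divn_eq. Qed.

Lemma card_ord_div (b : 'I_p) : #|[set i | ord_div i == b]| = d.
Proof.
have join_inj : injective (ord_join b).
  by move=> a a' /(congr1 ord_mod); rewrite !ord_mod_join.
rewrite -[RHS]card_ord -(card_imset _ join_inj); apply: eq_card => i.
rewrite inE; apply/eqP/imsetP => [<-|[a _ ->]]; last exact: ord_div_join.
by exists (ord_mod i); rewrite ?ord_joinK.
Qed.

End OrdinalBlocks.

Section CodedScheme.
Variables (V : finType) (n m : nat) (indep : nat -> {set V} -> bool).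
Hypothesis indep_card : forall j A, indep j A -> #|A| = j.
Hypothesis indep_split : forall S U : {set V},
  indep (n + m) S -> U \subset S -> #|U| = n -> indep n U && indep m (S :\: U).

Definition nodes := [set U | indep n U].
Definition batches := [set B | indep m B].
Definition groups := [set S | indep (n + m) S].
Local Notation C := 'C(n + m, n).

Definition misses (U B : {set V}) := indep (n + m) (U :|: B).

Definition n_subsets (S : {set V}) : seq {set V} :=
  enum [set U : {set V} | U \subset S & #|U| == n].

Definition groups_of (U : {set V}) : seq {set V} := enum [set S in groups | U \subset S].

Lemma mem_n_subsets (S U : {set V}) : (U \in n_subsets S) = (U \subset S) && (#|U| == n).
Proof. by rewrite mem_enum inE. Qed.

Lemma size_n_subsets (S : {set V}) : indep (n + m) S -> size (n_subsets S) = C.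
Proof. by move=> iS; rewrite -cardE cards_draws (indep_card iS). Qed.

Lemma n_subsets_indep (S U : {set V}) : indep (n + m) S -> U \in n_subsets S ->
  indep n U && indep m (S :\: U).
Proof. by move=> iS; rewrite mem_n_subsets => /andP[US /eqP cU]; apply: indep_split. Qed.

Lemma misses_setUK (U B : {set V}) :
  indep n U -> indep m B -> misses U B -> (U :|: B) :\: U = B.
Proof.
move=> /indep_card cU /indep_card cB /indep_card cUB.
have /cards0_eq UB0 : #|U :&: B| = 0%N.
  by move: cUB; rewrite cardsU cU cB; have := subset_leq_card (subsetIl U B); lia.
apply/setP => x; rewrite !inE; have := in_set0 x; rewrite -UB0 inE.
by case: (x \in U); case: (x \in B).
Qed.

Lemma misses_setD (S U : {set V}) : indep (n + m) S -> U \subset S -> misses U (S :\: U).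
Proof. by move=> iS US; rewrite /misses -{1}(setIidPr US) setID. Qed.

Lemma misses_other (S U U' : {set V}) : indep (n + m) S ->
  U \in n_subsets S -> U' \in n_subsets S -> U != U' -> ~~ misses U' (S :\: U).
Proof.
move=> iS; rewrite !mem_n_subsets => /andP[US /eqP cU] /andP[U'S /eqP cU'] neq.
apply: contra neq => /indep_card cS'.
have sub : U' :|: (S :\: U) \subset S by rewrite subUset U'S subsetDl.
have eqS : U' :|: (S :\: U) = S.
  by apply/eqP; rewrite eqEcard sub cS' (indep_card iS) leqnn.
have UU' : U \subset U'.
  apply/subsetP => x xU; have := subsetP US x xU.
  by rewrite -eqS !inE xU orbF.
by rewrite eqEcard UU' cU cU' leqnn.
Qed.

Lemma card_misses (U : {set V}) : indep n U ->
  #|[set B in batches | misses U B]| = #|[set S in groups | U \subset S]|.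
Proof.
move=> iU.
have join_inj : {in [set B in batches | misses U B] &, injective (setU U)}.
  move=> B1 B2 /[!inE] /andP[i1 m1] /andP[i2 m2] E.
  by rewrite -(misses_setUK iU i1 m1) E (misses_setUK iU i2 m2).
rewrite -(card_in_imset join_inj); apply: eq_card => S; apply/imsetP/idP.
  by case=> B /[!inE] /andP[_ mB] ->; rewrite subsetUl andbT.
rewrite !inE => /andP[iS US]; exists (S :\: U).
  by case/andP: (indep_split iS US (indep_card iU)) => _ iB; rewrite !inE iB misses_setD.
by rewrite -{1}(setIidPr US) setID.
Qed.

Lemma sum_card_groups_sup :
  (\sum_(U in nodes) #|[set S in groups | U \subset S]| = #|groups| * C)%N.
Proof.
transitivity (\sum_(U in nodes) \sum_(S in groups) if U \subset S then 1 else 0)%N.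
  by apply: eq_bigr => U _; rewrite -big_mkcondr sum1dep_card.
rewrite exchange_big -sum_nat_const; apply: eq_bigr => S; rewrite inE => iS.
rewrite -big_mkcondr sum1dep_card -(indep_card iS) -cards_draws.
apply: eq_card => U; rewrite !inE; apply/andP/andP => [[iU US]|[US /eqP cU]].
  by rewrite US (indep_card iU).
by case/andP: (indep_split iS US cU).
Qed.

Variables (N Q T : nat).
Hypotheses (N_gt0 : (0 < N)%N) (Q_gt0 : (0 < Q)%N) (T_gt0 : (0 < T)%N).
Hypotheses (F_dvd_N : (#|batches| %| N)%N) (K_dvd_Q : (#|nodes| %| Q)%N)
  (C_dvd_T : (C - 1 %| T)%N).
Local Notation K := #|nodes|.
Local Notation F := #|batches|.
Local Notation D := (N %/ F)%N.
Local Notation E := (Q %/ K)%N.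
Local Notation t := (T %/ (C - 1))%N.
Local Notation L := (D * E * t)%N.

Lemma N_eq : N = (F * D)%N. Proof. by rewrite mulnC divnK. Qed.
Lemma Q_eq : Q = (K * E)%N. Proof. by rewrite mulnC divnK. Qed.
Lemma T_eq : T = ((C - 1) * t)%N. Proof. by rewrite mulnC divnK. Qed.

Definition node0 : 'I_K := Ordinal (dvdn_gt0 Q_gt0 K_dvd_Q).
Definition batch0 : 'I_F := Ordinal (dvdn_gt0 N_gt0 F_dvd_N).
Definition piece0 : 'I_(C - 1) := Ordinal (dvdn_gt0 T_gt0 C_dvd_T).

Definition node (i : 'I_K) : {set V} := enum_val i.
Definition batch (b : 'I_F) : {set V} := enum_val b.
Definition node_index (U : {set V}) : 'I_K := enum_rank_in (enum_valP node0) U.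
Definition batch_index (B : {set V}) : 'I_F := enum_rank_in (enum_valP batch0) B.

Definition batch_of (f : 'I_N) : 'I_F := ord_div N_eq f.
Definition assign_of (j : 'I_Q) : 'I_K := ord_div Q_eq j.
Definition stores (i : 'I_K) : {set 'I_F} := [set b | ~~ misses (node i) (batch b)].

(* Encoding and decoding only read [restrict i v], which makes them local. *)
Definition restrict (i : 'I_K) (v : ivals N Q T) : ivals N Q T :=
  fun f j => if batch_of f \in stores i then v f j else nseq_tuple T false.

(* A value of node [U] on batch [B] is cut into [C - 1] pieces of [t] bits,
   one per other node of the group [U :|: B]. *)
Definition value (v : ivals N Q T) (U B : {set V}) (p : 'I_(C - 1))
    (a : 'I_D) (e : 'I_E) (x : 'I_t) : bool :=
  tnth (v (ord_join N_eq (batch_index B) a) (ord_join Q_eq (node_index U) e))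
    (ord_join T_eq p x).

(* [U'] sends piece [piece S U U'] of what [U] misses in the group [S]; piece
   [p] is sent by [sender S U p]. *)
Definition piece (S U U' : {set V}) : 'I_(C - 1) :=
  insubd piece0 (unbump (index U (n_subsets S)) (index U' (n_subsets S))).

Definition coded (v : ivals N Q T) (S U' : {set V}) (a : 'I_D) (e : 'I_E) (x : 'I_t) :=
  \big[addb/false]_(U <- n_subsets S | U != U') value v U (S :\: U) (piece S U U') a e x.

Definition position (a : 'I_D) (e : 'I_E) (x : 'I_t) : 'I_L :=
  ord_join (erefl L) (ord_join (erefl (D * E)%N) a e) x.

Definition block (v : ivals N Q T) (U' S : {set V}) : seq bool :=
  [seq coded v S U' (ord_div (erefl (D * E)%N) (ord_div (erefl L) i))
     (ord_mod (erefl (D * E)%N) (ord_div (erefl L) i)) (ord_mod (erefl L) i)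
  | i <- enum 'I_L].

Definition signal (i : 'I_K) (v : ivals N Q T) : seq bool :=
  flatten (map (block (restrict i v) (node i)) (groups_of (node i))).

Definition signal_len (i : 'I_K) : nat := (size (groups_of (node i)) * L)%N.

Definition sender (S U : {set V}) (p : 'I_(C - 1)) : {set V} :=
  nth set0 (n_subsets S) (bump (index U (n_subsets S)) p).

Definition received (s : 'I_K -> seq bool) (U' S : {set V}) : seq bool :=
  nth [::] (reshape (nseq (size (groups_of U')) L) (s (node_index U')))
    (index S (groups_of U')).

Definition decoded_bit (s : 'I_K -> seq bool) (v : ivals N Q T) (S U : {set V})
    (a : 'I_D) (e : 'I_E) (i : 'I_T) : bool :=
  let p := ord_div T_eq i in
  let x := ord_mod T_eq i in
  nth false (received s (sender S U p) S) (position a e x) (+)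
  \big[addb/false]_(U2 <- n_subsets S | (U2 != sender S U p) && (U2 != U))
     value v U2 (S :\: U2) (piece S U2 (sender S U p)) a e x.

Definition decode (i : 'I_K) (s : 'I_K -> seq bool) (v : ivals N Q T)
    (f : 'I_N) (j : 'I_Q) : T.-tuple bool :=
  let w := restrict i v in
  if batch_of f \in stores i then w f j else
  [tuple decoded_bit s w (node i :|: batch (batch_of f)) (node i)
           (ord_mod N_eq f) (ord_mod Q_eq j) l | l < T].

Lemma node_in i : node i \in nodes. Proof. exact: enum_valP. Qed.
Lemma batch_in b : batch b \in batches. Proof. exact: enum_valP. Qed.
Lemma node_indexK U : U \in nodes -> node (node_index U) = U.
Proof. exact: enum_rankK_in. Qed.
Lemma batch_indexK B : B \in batches -> batch (batch_index B) = B.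
Proof. exact: enum_rankK_in. Qed.

Lemma value_node_batch v i b p a e x :
  value v (node i) (batch b) p a e x =
  tnth (v (ord_join N_eq b a) (ord_join Q_eq i e)) (ord_join T_eq p x).
Proof. by rewrite /value /node_index /batch_index !enum_valK_in. Qed.

Lemma size_block v U' S : size (block v U' S) = L.
Proof. by rewrite size_map size_enum_ord. Qed.

Lemma nth_block v U' S a e x :
  nth false (block v U' S) (position a e x) = coded v S U' a e x.
Proof.
rewrite (nth_map (position a e x)) ?size_enum_ord // nth_ord_enum.
by rewrite !(ord_div_join, ord_mod_join).
Qed.

Lemma shape_blocks v U' (ss : seq {set V}) :
  shape (map (block v U') ss) = nseq (size ss) L.
Proof. by elim: ss => //= S ss ->; rewrite size_block. Qed.

Lemma size_signal i v : size (signal i v) = signal_len i.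
Proof. by rewrite size_flatten shape_blocks sumn_nseq mulnC. Qed.

Lemma received_signal v i S : S \in groups_of (node i) ->
  received (signal^~ v) (node i) S = block (restrict i v) (node i) S.
Proof.
move=> Si; rewrite /received /signal /node_index enum_valK_in.
rewrite -(shape_blocks (restrict i v) (node i)).
by rewrite flattenK (nth_map set0) ?index_mem // nth_index.
Qed.

Lemma big_value_restrict i v S (P : pred {set V}) (g : {set V} -> 'I_(C - 1)) a e x :
  indep (n + m) S -> node i \in n_subsets S -> (forall U, P U -> U != node i) ->
  \big[addb/false]_(U <- n_subsets S | P U) value (restrict i v) U (S :\: U) (g U) a e x =
  \big[addb/false]_(U <- n_subsets S | P U) value v U (S :\: U) (g U) a e x.
Proof.
move=> iS iSi Pi; rewrite big_seq_cond [RHS]big_seq_cond.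
apply: eq_bigr => U /andP[US /Pi Ui].
have /andP[_ iB] := n_subsets_indep iS US.
rewrite /value /restrict /batch_of ord_div_join inE batch_indexK ?inE //.
by rewrite misses_other.
Qed.

Lemma coded_cancel v S U U' a e x : U \in n_subsets S -> U != U' ->
  coded v S U' a e x (+)
  \big[addb/false]_(U2 <- n_subsets S | (U2 != U') && (U2 != U))
     value v U2 (S :\: U2) (piece S U2 U') a e x =
  value v U (S :\: U) (piece S U U') a e x.
Proof.
move=> US UU'; rewrite /coded big_mkcond (bigD1_seq U) ?enum_uniq //= UU'.
set others := \big[addb/false]_(U2 <- _ | _ && _) _.
suff -> : \big[addb/false]_(U2 <- n_subsets S | U2 != U)
    (if U2 != U' then value v U2 (S :\: U2) (piece S U2 U') a e x else false) = others.
  by rewrite addbK.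
rewrite /others [RHS]big_mkcond [LHS]big_mkcond; apply: eq_bigr => U2 _.
by case: (U2 != U); case: (U2 != U').
Qed.

Lemma sender_spec S U p : indep (n + m) S -> U \in n_subsets S ->
  [/\ sender S U p \in n_subsets S, sender S U p != U & piece S U (sender S U p) = p].
Proof.
move=> iS US; set r := index U (n_subsets S); have sz := size_n_subsets iS.
have bump_lt : (bump r p < size (n_subsets S))%N.
  by rewrite sz /bump; have := ltn_ord p; case: (r <= p)%N => /=; lia.
have idx : index (sender S U p) (n_subsets S) = bump r p.
  by apply: index_uniq; rewrite ?enum_uniq.
split; first exact: mem_nth.
  by apply/eqP => eqU; have := neq_bump r p; rewrite -idx eqU eqxx.
by apply: val_inj; rewrite /piece idx bumpK val_insubd ltn_ord.
Qed.

Lemma decode_correct i v f j :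
  assign_of j = i -> decode i (signal^~ v) v f j = v f j.
Proof.
move=> ji; rewrite /decode; case: ifP => [stored|missed]; first by rewrite /restrict stored.
apply: eq_from_tnth => l; rewrite tnth_mktuple.
set b := batch_of f; set S := node i :|: batch b.
have iU : indep n (node i) by have := node_in i; rewrite inE.
have iB : indep m (batch b) by have := batch_in b; rewrite inE.
have iS : indep (n + m) S by move: missed; rewrite inE => /negbFE.
have US : node i \in n_subsets S by rewrite mem_n_subsets subsetUl (indep_card iU) eqxx.
rewrite /decoded_bit; set p := ord_div T_eq l; set x := ord_mod T_eq l.
have [sender_in sender_neq sender_piece] := sender_spec p iS US.
have [i' node_i'] : exists i', node i' = sender S (node i) p.
  exists (node_index (sender S (node i) p)); apply: node_indexK.
  by rewrite inE; case/andP: (n_subsets_indep iS sender_in).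
rewrite -node_i' in sender_in sender_neq sender_piece *.
have Si' : S \in groups_of (node i').
  rewrite mem_enum inE; apply/andP; split; first by rewrite inE.
  by move: sender_in; rewrite mem_n_subsets => /andP[].
rewrite received_signal // nth_block big_value_restrict //; last by move=> U /andP[].
rewrite /coded big_value_restrict // -/(coded v S (node i') _ _ _).
rewrite coded_cancel // 1?eq_sym // sender_piece misses_setUK // value_node_batch.
by rewrite /b /batch_of -ji /assign_of !ord_joinK.
Qed.

Lemma restrict_local i (v v' : ivals N Q T) :
  (forall f j, batch_of f \in stores i -> v f j = v' f j) -> restrict i v = restrict i v'.
Proof.
move=> eq_v; apply: functional_extensionality => f; apply: functional_extensionality => j.
by rewrite /restrict; case: ifP => // /eq_v ->.
Qed.

Lemma signal_local i (v v' : ivals N Q T) :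
  (forall f j, batch_of f \in stores i -> v f j = v' f j) -> signal i v = signal i v'.
Proof. by move=> eq_v; rewrite /signal (restrict_local eq_v). Qed.

Lemma decode_local i (s s' : 'I_K -> seq bool) (v v' : ivals N Q T) :
  (forall k, s k = s' k) -> (forall f j, batch_of f \in stores i -> v f j = v' f j) ->
  forall f j, decode i s v f j = decode i s' v' f j.
Proof.
move=> eq_s eq_v f j.
by rewrite /decode (restrict_local eq_v) (functional_extensionality _ _ eq_s).
Qed.

Definition coded_scheme : scheme N K Q F T :=
  Scheme (card_ord_div N_eq) (card_ord_div Q_eq) size_signal signal_local
    decode_local decode_correct.

Lemma card_stored_files i : #|stored_files coded_scheme i| = (D * #|stores i|)%N.
Proof.
rewrite /stored_files /= -sum1dep_card.
rewrite (partition_big batch_of (fun b => b \in stores i)) //.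
rewrite mulnC -sum_nat_const; apply: eq_bigr => b bi.
transitivity #|[set f | batch_of f == b]|; last exact: card_ord_div.
rewrite sum1dep_card; apply: eq_card => f; rewrite !inE.
apply/andP/idP => [[] // | fb]; split=> //.
by move/eqP: fb bi => <-; rewrite inE.
Qed.

Lemma card_stores i : (#|stores i| + #|[set S in groups | node i \subset S]|)%N = F.
Proof.
have iU : indep n (node i) by have := node_in i; rewrite inE.
rewrite -(card_misses iU) -[in RHS](card_ord F) -(cardsC (stores i)); congr (_ + _)%N.
rewrite -[RHS](card_imset _ enum_val_inj); apply: eq_card => B; rewrite inE.
apply/andP/imsetP => [[iB mB]|[b] /[!inE] /negbNE mb ->].
  exists (batch_index B); first by rewrite !inE negbK batch_indexK.
  by rewrite /batch_index enum_rankK_in.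
by split=> //; have := batch_in b; rewrite inE.
Qed.

Lemma sum_card_stored_files :
  (\sum_(i < K) #|stored_files coded_scheme i| + D * (#|groups| * C))%N = (D * (K * F))%N.
Proof.
rewrite -sum_card_groups_sup [X in (_ + _ * X)%N]big_enum_val big_distrr -big_split.
rewrite (eq_bigr (fun=> D * F)%N) ?sum_nat_const ?card_ord 1?mulnCA // => i _.
by rewrite card_stored_files /= -mulnDr card_stores.
Qed.

Lemma sum_signal_len : (\sum_(i < K) signal_len i = #|groups| * C * L)%N.
Proof.
rewrite -sum_card_groups_sup [X in (X * _)%N]big_enum_val big_distrl.
by apply: eq_bigr => i _; rewrite /signal_len /groups_of -cardE.
Qed.

Local Open Scope ring_scope.

Lemma comp_load_coded_scheme :
  comp_load coded_scheme = K%:R - (#|groups| * C)%:R / F%:R.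
Proof.
have F_gt0 : (0 < F)%N := dvdn_gt0 N_gt0 F_dvd_N.
have D_gt0 : (0 < D)%N by rewrite divn_gt0 // dvdn_leq.
rewrite /comp_load; move/(congr1 (fun s => s%:R : rat)): sum_card_stored_files.
rewrite natrD => /(canRL (addrK _)) ->; rewrite [X in _ / X%:R]N_eq !natrM.
by field; rewrite !pnatr_eq0 -!lt0n D_gt0 F_gt0.
Qed.

Lemma comm_load_coded_scheme :
  comm_load coded_scheme = (#|groups| * C)%:R / (K * F * (C - 1))%:R.
Proof.
have pos (k : nat) : (0 < k)%N -> (k%:R : rat) != 0 by rewrite pnatr_eq0 -lt0n.
have K_gt0 : (0 < K)%N := dvdn_gt0 Q_gt0 K_dvd_Q.
have F_gt0 : (0 < F)%N := dvdn_gt0 N_gt0 F_dvd_N.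
have C_gt0 : (0 < C - 1)%N := dvdn_gt0 T_gt0 C_dvd_T.
have D_gt0 : (0 < D)%N by rewrite divn_gt0 // dvdn_leq.
have E_gt0 : (0 < E)%N by rewrite divn_gt0 // dvdn_leq.
have t_gt0 : (0 < t)%N by rewrite divn_gt0 // dvdn_leq.
rewrite /comm_load /= sum_signal_len [in X in _ / X%:R]Q_eq.
rewrite [in X in _ / X%:R]N_eq [in X in _ / X%:R]T_eq !natrM.
by field; rewrite !pos.
Qed.

End CodedScheme.

Section GaussianCounts.
Variables (q k : nat).
Hypothesis q_gt1 : (1 < q)%N.
Local Open Scope ring_scope.

(* Number of points of the projective space of [F_q^k] outside a fixed
   subspace of dimension [i]. *)
Definition n_points_outside (i : nat) : rat := (q%:R ^+ k - q%:R ^+ i) / (q%:R - 1).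

Lemma natr_q_sub1_neq0 : (q%:R : rat) - 1 != 0.
Proof. by rewrite subr_eq0 pnatr_eq1 neq_ltn q_gt1 orbT. Qed.

Lemma gbin1_neq0 a : (0 < a)%N -> gbin1 q a != 0.
Proof.
move=> a_gt0; rewrite /gbin1 mulf_neq0 ?invr_eq0 ?natr_q_sub1_neq0 //.
have : (1 < q ^ a)%N by rewrite -{1}(expn0 q) ltn_exp2l.
by rewrite subr_eq0 -natrX pnatr_eq1 neq_ltn => ->; rewrite orbT.
Qed.

Lemma n_points_outsideE i : (i <= k)%N -> q%:R ^+ i * gbin1 q (k - i) = n_points_outside i.
Proof. by move=> ik; rewrite /gbin1 /n_points_outside mulrA mulrBr mulr1 -exprD subnKC. Qed.

Lemma n_indep_pointsE (F : finFieldType) j : #|F| = q -> (j <= k)%N ->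
  (n_indep_points F k j)%:R = (j`!%:R)^-1 * \prod_(i < j) n_points_outside i.
Proof.
move=> card_F jk.
have natr_prod_diff : \prod_(i < j) (q%:R ^+ k - q%:R ^+ i) =
    ((\prod_(i < j) (q ^ k - q ^ i))%N)%:R :> rat.
  rewrite natr_prod; apply: eq_bigr => i _.
  rewrite natrB ?natrX // leq_pexp2l ?(ltnW q_gt1) //.
  exact: ltnW (leq_trans (ltn_ord i) jk).
rewrite /n_points_outside prodf_div prodr_const card_ord natr_prod_diff.
rewrite -card_F -(n_indep_points_prod F k j) card_F !natrM natrX natrB ?(ltnW q_gt1) //.
by field; rewrite expf_neq0 ?natr_q_sub1_neq0 // pnatr_eq0 -lt0n fact_gt0.
Qed.

Lemma prod_n_points_outside j : (j <= k)%N ->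
  q%:R ^+ (j * (j - 1) %/ 2) * \prod_(i < j) gbin1 q (k - i) =
  \prod_(i < j) n_points_outside i.
Proof.
move=> jk; have -> : (j * (j - 1) %/ 2 = \sum_(i < j) i)%N.
  by rewrite -(big_mkord xpredT (fun i => i)) bin2_sum bin2 subn1 divn2.
rewrite expr_sum -big_split /=; apply: eq_bigr => i _; apply: n_points_outsideE.
exact: ltnW (leq_trans (ltn_ord i) jk).
Qed.

Lemma prod_n_points_outside_addn a b : (a + b <= k)%N ->
  \prod_(i < a + b) n_points_outside i = \prod_(i < a) n_points_outside i *
    \prod_(i < b) n_points_outside i *
    (q%:R ^+ (a * b) * \prod_(i < b) (gbin1 q (k - a - i) / gbin1 q (k - i))).
Proof.
move=> abk; rewrite big_split_ord /= -mulrA; congr (_ * _).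
have -> : q%:R ^+ (a * b) = \prod_(i < b) q%:R ^+ a :> rat.
  by rewrite prodr_const card_ord exprM.
rewrite -!big_split /=; apply: eq_bigr => i _.
have i_lt := ltn_ord i.
have i_le : (i <= k)%N by lia.
have ai_le : (a + i <= k)%N by lia.
rewrite -(n_points_outsideE i_le) -(n_points_outsideE ai_le) subnDA exprD.
by field; rewrite gbin1_neq0 //; lia.
Qed.

Lemma natr_binomial_addn a b :
  ('C(a + b, a)%:R : rat) = (a + b)`!%:R / (a`!%:R * b`!%:R).
Proof.
rewrite -(bin_fact (leq_addr b a)) addKn !natrM.
by field; rewrite !pnatr_eq0 -!lt0n !fact_gt0.
Qed.

Lemma n_indep_points_addn (F : finFieldType) a b : #|F| = q -> (a + b <= k)%N ->
  (n_indep_points F k (a + b))%:R * 'C(a + b, a)%:R =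
  (n_indep_points F k a)%:R * (n_indep_points F k b)%:R *
  (q%:R ^+ (a * b) * \prod_(i < b) (gbin1 q (k - a - i) / gbin1 q (k - i))).
Proof.
move=> card_F abk.
have [ak bk] : (a <= k)%N /\ (b <= k)%N by lia.
rewrite !n_indep_pointsE // prod_n_points_outside_addn // natr_binomial_addn.
by field; rewrite !pnatr_eq0 -!lt0n !fact_gt0.
Qed.

Lemma n_indep_points_addn_sym (F : finFieldType) a b : #|F| = q -> (a + b <= k)%N ->
  (n_indep_points F k (a + b))%:R * 'C(a + b, a)%:R =
  (n_indep_points F k a)%:R * (n_indep_points F k b)%:R *
  (q%:R ^+ (a * b) * \prod_(i < a) (gbin1 q (k - b - i) / gbin1 q (k - i))).
Proof.
move=> card_F abk; rewrite [_ * (n_indep_points F k b)%:R]mulrC mulnC.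
rewrite -n_indep_points_addn 1?addnC // addnC; congr (_ * _%:R).
by rewrite -bin_sub ?leq_addr // addKn.
Qed.

End GaussianCounts.

Local Open Scope ring_scope.

Theorem theorem6 (k n m q : nat) :
  (0 < n)%N -> (0 < m)%N -> (n + m <= k)%N -> is_prime_power q ->
  exists KC FC : nat,
    (KC%:R : rat) = (n`!%:R)^-1 * (q%:R) ^+ ((n * (n - 1)) %/ 2)
                    * \prod_(i < n) gbin1 q (k - i) /\
    (FC%:R : rat) = (m`!%:R)^-1 * (q%:R) ^+ ((m * (m - 1)) %/ 2)
                    * \prod_(i < m) gbin1 q (k - i) /\
    forall N Q T : nat,
      (0 < N)%N -> (FC %| N)%N -> (0 < Q)%N -> (KC %| Q)%N -> (0 < T)%N ->
      ('C(n + m, n) - 1 %| T)%N ->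
      exists S : scheme N KC Q FC T,
        comp_load S = KC%:R * (1 - (q%:R) ^+ (n * m)
                         * \prod_(i < m) (gbin1 q (k - n - i) / gbin1 q (k - i))) /\
        comm_load S = (q%:R) ^+ (n * m) / (('C(n + m, n))%:R - 1)
                         * \prod_(i < n) (gbin1 q (k - m - i) / gbin1 q (k - i)).
Proof.
move=> n_gt0 m_gt0 nm_k [p [e [p_prime [e_gt0 q_eq]]]].
case: (pPrimePowerField p_prime e_gt0) => Fq _; rewrite -q_eq => card_Fq.
have q_gt1 : (1 < q)%N by rewrite q_eq -(expn0 p) ltn_exp2l ?prime_gt1.
have [n_k m_k] : (n <= k)%N /\ (m <= k)%N by lia.
pose G := n_indep_points Fq k.
exists (G n), (G m); split; last split.
- by rewrite -mulrA prod_n_points_outside // (n_indep_pointsE _ card_Fq).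
- by rewrite -mulrA prod_n_points_outside // (n_indep_pointsE _ card_Fq).
move=> N Q T N_gt0 F_dvd_N Q_gt0 K_dvd_Q T_gt0 C_dvd_T.
have indep_split := @indep_points_split Fq k n m.
exists (coded_scheme (@indep_points_card Fq k) indep_split
  N_gt0 Q_gt0 T_gt0 F_dvd_N K_dvd_Q C_dvd_T).
have K_gt0 : (G n)%:R != 0 :> rat by rewrite pnatr_eq0 -lt0n (dvdn_gt0 Q_gt0).
have F_gt0 : (G m)%:R != 0 :> rat by rewrite pnatr_eq0 -lt0n (dvdn_gt0 N_gt0).
have C_gt1 : (1 < 'C(n + m, n))%N by rewrite -subn_gt0 (dvdn_gt0 T_gt0).
rewrite comp_load_coded_scheme comm_load_coded_scheme !natrM; split.
  by rewrite (n_indep_points_addn q_gt1 card_Fq nm_k); field.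
rewrite (n_indep_points_addn_sym q_gt1 card_Fq nm_k) natrB ?(ltnW C_gt1) //.
by field; rewrite K_gt0 F_gt0 subr_eq0 pnatr_eq1 neq_ltn C_gt1 orbT.
Qed.
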